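(* Let $n\geqslant 3$ and let $\lambda=(\lambda_1,\ldots,\lambda_s)$ be a partition of $n$ with $s\geqslant 2$ and $\lambda_1>\lambda_2$. Put $m=\lambda_2+\cdots+\lambda_s$. Let $t$ be a standard tableau of shape $\lambda$ with $n$ placed in the rightmost cell of its first row. Then the polytabloid $\mathbf{e}_t$ is an eigenvector of $J_n$ (acting on $M^\lambda$) with eigenvalue $n-m-1$, i.e. $J_n(\mathbf{e}_t)=(n-m-1)\mathbf{e}_t$.
   Context: For $\pi\in\mathrm{Sym}_n$ and a tableau $t$ of shape $\lambda$ (filling of the Young diagram with $1,\ldots,n$), $\pi(t)$ replaces each entry $x$ by $\pi(x)$. The $\lambda$-tabloid $\{t\}$ is the set of tableaux obtained from $t$ by permuting entries within rows; $M^\lambda$ is the complex vector space with basis the $\lambda$-tabloids, with $\mathrm{Sym}_n$ acting by $\pi\{t\}=\{\pi(t)\}$. $C_t$ is the column-stabilizer of $t$ and $\mathbf{e}_t=\sum_{\sigma\in C_t}\mathrm{sgn}(\sigma)\{\sigma(t)\}$. The Jucys–Murphy element $J_n=(1\ n)+(2\ n)+\cdots+(n-1\ n)$ acts on $M^\lambda$ via this action. A tableau is standard if its entries increase along rows and down columns. *)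

From HB Require Import structures.
From mathcomp Require Import all_boot all_order all_fingroup all_algebra all_field.
Set Implicit Arguments. Unset Strict Implicit. Unset Printing Implicit Defensive.
Import GRing.Theory Num.Theory.
Local Open Scope ring_scope.

(* Entries 1..n are encoded as ordinals 0..n-1 of 'I_n (entry k+1 <-> k).
   Cells of a Young diagram are pairs (row, column) in 'I_n * 'I_n
   (0-based); a tableau is a filling: cells of the diagram carry Some entry,
   cells outside the diagram carry None. *)
Definition tab (n : nat) := {ffun 'I_n * 'I_n -> option 'I_n}.

Definition is_partition (n : nat) (la : seq nat) : bool :=
  [&& sorted geq la, all (fun k => 0 < k)%N la & sumn la == n].

Definition in_diagram n (la : seq nat) (c : 'I_n * 'I_n) : bool :=
  (c.2 < nth 0 la c.1)%N.

Definition is_tableau n (la : seq nat) (t : tab n) : bool :=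
  [forall c, (t c != None) == in_diagram la c] &&
  [forall c, forall c', (t c != None) ==> (t c == t c') ==> (c == c')].

Definition ent n (t : tab n) (c : 'I_n * 'I_n) : nat :=
  if t c is Some x then val x else 0.

Definition is_standard n (la : seq nat) (t : tab n) : bool :=
  is_tableau la t &&
  [forall c, forall c', (t c != None) ==> (t c' != None) ==>
     (((c.1 == c'.1) && (c.2 < c'.2)%N) || ((c.2 == c'.2) && (c.1 < c'.1)%N))
     ==> (ent t c < ent t c')%N].

Definition perm_tab n (pi : {perm 'I_n}) (t : tab n) : tab n :=
  [ffun c => omap pi (t c)].

Definition same_row n (t : tab n) (x y : 'I_n) : bool :=
  [exists i, exists j, exists j', (t (i, j) == Some x) && (t (i, j') == Some y)].
Definition same_col n (t : tab n) (x y : 'I_n) : bool :=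
  [exists j, exists i, exists i', (t (i, j) == Some x) && (t (i', j) == Some y)].

Definition row_stab n (t : tab n) : {set {perm 'I_n}} :=
  [set pi : {perm 'I_n} | [forall x, same_row t x (pi x)]].
Definition col_stab n (t : tab n) : {set {perm 'I_n}} :=
  [set pi : {perm 'I_n} | [forall x, same_col t x (pi x)]].

Definition tabloid n (t : tab n) : {set tab n} :=
  [set perm_tab pi t | pi in row_stab t].

(* Vectors: complex-valued functions on sets of tableaux; M^la is the span of
   the indicator vectors of the la-tabloids. *)
Notation vec n := {ffun {set tab n} -> algC^o}.

Definition delta n (S : {set tab n}) : vec n := [ffun S' => ((S' == S)%:R : algC)].

(* pi acts on a set of tableaux elementwise, so pi{t} = {pi(t)} *)
Definition perm_set n (pi : {perm 'I_n}) (S : {set tab n}) : {set tab n} :=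
  [set perm_tab pi u | u in S].

Definition act n (pi : {perm 'I_n}) (f : vec n) : vec n :=
  \sum_(S : {set tab n}) f S *: delta (perm_set pi S).

Definition polytabloid n (t : tab n) : vec n :=
  \sum_(sigma in col_stab t) ((-1) ^+ odd_perm sigma) *: delta (tabloid (perm_tab sigma t)).

(* Jucys--Murphy element J_n = (1 n) + ... + (n-1 n): in the 0-based encoding,
   the sum of transpositions (x y) with val y = n-1 and val x < n-1. *)
Definition JM n (f : vec n) : vec n :=
  \sum_(x : 'I_n) \sum_(y : 'I_n | (val y == n.-1) && (val x < n.-1)%N)
     act (tperm x y) f.

From Pilot Require Import Defs.
From mathcomp Require Import all_boot all_order all_fingroup all_algebra all_field.
From mathcomp Require Import zify.
Import GRing.Theory Num.Theory.
Local Open Scope ring_scope.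
Set Implicit Arguments. Unset Strict Implicit.

(* Every sigma in the column group C_t fixes n, which is alone in its column
   because lambda_1 > lambda_2; hence (x n) sigma = sigma (sigma^-1 x n), and
   reindexing gives J_n e_t = sum_(x <> n) sum_(sigma in C_t) sgn sigma {sigma (x n) t}.
   If x lies in the first row, (x n) is in R_t and the inner sum is e_t.
   Otherwise let a be the first-row entry in the column of x: the transposition
   (a x) lies in C_t and in the row group of (x n) t, so the inner sum is killed
   by the sign-reversing involution sigma |-> (a x) sigma.  The first row thus
   contributes lambda_1 - 1 = n - m - 1 copies of e_t. *)

Section TableauAction.
Variable n : nat.
Implicit Types (u w : tab n) (pi rho s : {perm 'I_n}) (x y : 'I_n).

Definition inj_tab u := forall c c' x, u c = Some x -> u c' = Some x -> c = c'.
Definition surj_tab u := forall x, exists c, u c = Some x.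

Lemma is_tableau_inj (la : seq nat) u : is_tableau la u -> inj_tab u.
Proof.
case/andP=> _ /forallP u_inj c c' x uc uc'.
by apply/eqP; move/forallP/(_ c'): (u_inj c); rewrite uc uc' eqxx.
Qed.

Lemma is_tableau_diag (la : seq nat) u :
  is_tableau la u -> forall c, (u c != None) = in_diagram la c.
Proof. by case/andP=> /forallP diag _ c; move/eqP: (diag c). Qed.

Lemma perm_tabM pi rho u : perm_tab pi (perm_tab rho u) = perm_tab (rho * pi)%g u.
Proof. by apply/ffunP => c; rewrite !ffunE; case: (u c) => //= x; rewrite permM. Qed.

Lemma omap_perm_eq pi (o : option 'I_n) x : (omap pi o == Some x) = (o == Some (pi^-1 x)%g).
Proof. by case: o => //= z; apply/eqP/eqP => [[<-]|[->]]; rewrite ?permK ?permKV. Qed.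

Lemma inj_perm_tab pi u : inj_tab u -> inj_tab (perm_tab pi u).
Proof.
move=> u_inj c c' x; rewrite !ffunE => /eqP; rewrite omap_perm_eq => /eqP ux.
by move/eqP; rewrite omap_perm_eq => /eqP; apply: u_inj ux.
Qed.

Lemma surj_perm_tab pi u : surj_tab u -> surj_tab (perm_tab pi u).
Proof.
by move=> u_surj x; have [c uc] := u_surj (pi^-1 x)%g; exists c; rewrite ffunE uc /= permKV.
Qed.

Lemma same_row_perm pi u x y :
  same_row (perm_tab pi u) x y = same_row u (pi^-1 x)%g (pi^-1 y)%g.
Proof.
apply: eq_existsb => i; apply: eq_existsb => j; apply: eq_existsb => j'.
by rewrite !ffunE !omap_perm_eq.
Qed.

Lemma same_row_trans u x y z : inj_tab u ->
  same_row u x y -> same_row u y z -> same_row u x z.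
Proof.
move=> u_inj /existsP[i /existsP[j /existsP[j' /andP[/eqP ux /eqP uy]]]].
move=> /existsP[i' /existsP[k /existsP[k' /andP[/eqP uy' /eqP uz]]]].
case: (u_inj _ _ _ uy uy') => ii' _; rewrite ii' in ux.
by apply/existsP; exists i'; apply/existsP; exists j; apply/existsP; exists k'; rewrite ux uz !eqxx.
Qed.

Lemma same_col_trans u x y z : inj_tab u ->
  same_col u x y -> same_col u y z -> same_col u x z.
Proof.
move=> u_inj /existsP[j /existsP[i /existsP[i' /andP[/eqP ux /eqP uy]]]].
move=> /existsP[j' /existsP[k /existsP[k' /andP[/eqP uy' /eqP uz]]]].
case: (u_inj _ _ _ uy uy') => _ jj'; rewrite jj' in ux.
by apply/existsP; exists j'; apply/existsP; exists i; apply/existsP; exists k'; rewrite ux uz !eqxx.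
Qed.

Lemma same_row_sym u x y : same_row u x y -> same_row u y x.
Proof.
move=> /existsP[i /existsP[j /existsP[j' /andP[ux uy]]]].
by apply/existsP; exists i; apply/existsP; exists j'; apply/existsP; exists j; rewrite ux uy.
Qed.

Lemma row_stabM u pi rho : inj_tab u ->
  pi \in row_stab u -> rho \in row_stab u -> (pi * rho)%g \in row_stab u.
Proof.
move=> u_inj; rewrite !inE => /forallP piR /forallP rhoR; apply/forallP => x.
by rewrite permM; apply: same_row_trans u_inj (piR x) (rhoR _).
Qed.

Lemma row_stabV u pi : pi \in row_stab u -> (pi^-1)%g \in row_stab u.
Proof.
rewrite !inE => /forallP piR; apply/forallP => x.
by have := piR (pi^-1 x)%g; rewrite permKV => /same_row_sym.
Qed.

Lemma col_stabM u pi rho : inj_tab u ->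
  pi \in col_stab u -> rho \in col_stab u -> (pi * rho)%g \in col_stab u.
Proof.
move=> u_inj; rewrite !inE => /forallP piC /forallP rhoC; apply/forallP => x.
by rewrite permM; apply: same_col_trans u_inj (piC x) (rhoC _).
Qed.

Lemma row_stab_perm_tab pi rho u :
  (rho \in row_stab (perm_tab pi u)) = ((pi * rho * pi^-1)%g \in row_stab u).
Proof.
rewrite !inE; apply/forallP/forallP => rhoR x.
  by have := rhoR (pi x); rewrite same_row_perm permK !permM.
by have := rhoR (pi^-1 x)%g; rewrite same_row_perm !permM permKV.
Qed.

Lemma tabloid_perm_tab pi u : tabloid (perm_tab pi u) = perm_set pi (tabloid u).
Proof.
apply/setP => v; rewrite /tabloid /perm_set -imset_comp.
apply/imsetP/imsetP => [[rho rhoR ->]|[rho rhoR ->]].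
  exists (pi * rho * pi^-1)%g; first by rewrite -row_stab_perm_tab.
  by rewrite /= !perm_tabM -mulgA mulVg mulg1.
exists (pi^-1 * rho * pi)%g; first by rewrite row_stab_perm_tab !mulgA mulgV mul1g mulgK.
by rewrite /= !perm_tabM !mulgA mulgV mul1g.
Qed.

Lemma tabloid_row_stab u rho : inj_tab u -> rho \in row_stab u ->
  tabloid (perm_tab rho u) = tabloid u.
Proof.
move=> u_inj rhoR; rewrite tabloid_perm_tab; apply/setP => v.
rewrite /perm_set /tabloid -imset_comp; apply/imsetP/imsetP => [[r rR ->]|[r rR ->]].
  by exists (r * rho)%g; [apply: row_stabM | rewrite /= perm_tabM].
exists (r * rho^-1)%g; first by apply: row_stabM => //; apply: row_stabV.
by rewrite /= perm_tabM mulgKV.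
Qed.

Lemma col_stab_surj u s : s \in col_stab u -> surj_tab u.
Proof.
rewrite inE => /forallP sC x.
by have /existsP[j /existsP[i /existsP[_ /andP[/eqP ux _]]]] := sC x; exists (i, j).
Qed.

Lemma tperm_row_stab u c c' x y : surj_tab u ->
  u c = Some x -> u c' = Some y -> c.1 = c'.1 -> tperm x y \in row_stab u.
Proof.
move=> u_surj ux uy row_cc'; rewrite inE; apply/forallP => z.
case: (tpermP x y z) => [->|->|_ _].
- by apply/existsP; exists c.1; apply/existsP; exists c.2; apply/existsP; exists c'.2;
    rewrite -surjective_pairing row_cc' -surjective_pairing ux uy !eqxx.
- by apply/existsP; exists c.1; apply/existsP; exists c'.2; apply/existsP; exists c.2;
    rewrite -surjective_pairing row_cc' -surjective_pairing ux uy !eqxx.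
- have [d ud] := u_surj z; apply/existsP; exists d.1; apply/existsP; exists d.2.
  by apply/existsP; exists d.2; rewrite -surjective_pairing ud eqxx.
Qed.

Lemma tperm_col_stab u c c' x y : surj_tab u ->
  u c = Some x -> u c' = Some y -> c.2 = c'.2 -> tperm x y \in col_stab u.
Proof.
move=> u_surj ux uy col_cc'; rewrite inE; apply/forallP => z.
case: (tpermP x y z) => [->|->|_ _].
- by apply/existsP; exists c.2; apply/existsP; exists c.1; apply/existsP; exists c'.1;
    rewrite -surjective_pairing col_cc' -surjective_pairing ux uy !eqxx.
- by apply/existsP; exists c.2; apply/existsP; exists c'.1; apply/existsP; exists c.1;
    rewrite -surjective_pairing col_cc' -surjective_pairing ux uy !eqxx.
- have [d ud] := u_surj z; apply/existsP; exists d.2; apply/existsP; exists d.1.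
  by apply/existsP; exists d.1; rewrite -surjective_pairing ud eqxx.
Qed.

Definition alt_tabloid_sum (C : {set {perm 'I_n}}) u : vec n :=
  \sum_(s in C) ((-1) ^+ odd_perm s : algC) *: delta (tabloid (perm_tab s u)).

Lemma act_sum_delta (I : finType) (A : pred I) (k : I -> algC) (S : I -> {set tab n}) pi :
  Defs.act pi (\sum_(i in A) k i *: delta (S i)) =
  \sum_(i in A) k i *: delta (perm_set pi (S i)).
Proof.
rewrite /Defs.act; under eq_bigr => T _ do rewrite sum_ffunE scaler_suml.
rewrite exchange_big /=; apply: eq_bigr => i _.
rewrite (bigD1 (S i)) //= big1 ?addr0 => [|T /negbTE TSi].
  by rewrite !ffunE eqxx /= -[k i *: (1 : algC^o)]/(k i * 1) mulr1.
by rewrite !ffunE TSi /= -[k i *: (0 : algC^o)]/(k i * 0) mulr0 scale0r.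
Qed.

Lemma alt_tabloid_sum_row_stab C u rho : inj_tab u -> rho \in row_stab u ->
  alt_tabloid_sum C (perm_tab rho u) = alt_tabloid_sum C u.
Proof.
move=> u_inj rhoR; apply: eq_bigr => s _.
by rewrite tabloid_perm_tab tabloid_row_stab // -tabloid_perm_tab.
Qed.

(* The sign-reversing involution sigma |-> (x y) sigma pairs off the terms. *)
Lemma alt_tabloid_sum_eq0 t w x y : inj_tab t -> inj_tab w -> x != y ->
  tperm x y \in col_stab t -> tperm x y \in row_stab w ->
  alt_tabloid_sum (col_stab t) w = 0.
Proof.
move=> t_inj w_inj xy xyC xyR; set S := alt_tabloid_sum _ _.
have SN : S = - S.
  rewrite {1}/S /alt_tabloid_sum (reindex_inj (mulgI (tperm x y))) /= -sumrN.
  apply: eq_big => [s | s _].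
    apply/idP/idP => [|sC]; last exact: col_stabM.
    by move/(col_stabM t_inj xyC); rewrite -{1}tpermV mulKg.
  rewrite -perm_tabM tabloid_perm_tab tabloid_row_stab // -tabloid_perm_tab.
  by rewrite odd_permM odd_tperm xy signr_addb expr1 mulN1r scaleNr.
have : (2%:R : algC) *: S = 0 by rewrite scaler_nat mulr2n {1}SN addNr.
by move/eqP; rewrite scaler_eq0 pnatr_eq0 /= => /eqP.
Qed.

Lemma sum_act_tperm_alt (C : {set {perm 'I_n}}) u z : {in C, forall s, s z = z} ->
  \sum_(x | x != z) Defs.act (tperm x z) (alt_tabloid_sum C u) =
  \sum_(x | x != z) alt_tabloid_sum C (perm_tab (tperm x z) u).
Proof.
move=> Cz; under eq_bigr => x _ do rewrite act_sum_delta.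
rewrite exchange_big [RHS]exchange_big /=; apply: eq_bigr => s sC.
rewrite (reindex_inj (@perm_inj _ s)) /=; apply: eq_big => [x | x _].
  by rewrite -{1}(Cz s sC) (inj_eq perm_inj).
rewrite -tabloid_perm_tab !perm_tabM; congr (_ *: delta (tabloid (perm_tab _ u))).
apply/permP => v; rewrite !permM -{1}(Cz s sC).
case: (tpermP x z v) => [->|->|vx vz]; first by rewrite tpermL.
  by rewrite tpermR.
by rewrite tpermD // (inj_eq perm_inj) eq_sym; apply/eqP.
Qed.

Lemma JM_tperm_sum (f : vec n) (z : 'I_n) : val z = n.-1 ->
  JM f = \sum_(x | x != z) Defs.act (tperm x z) f.
Proof.
move=> z_last; rewrite /JM [RHS]big_mkcond /=; apply: eq_bigr => x _.
have -> : (val x < n.-1)%N = (x != z).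
  by have := ltn_ord x; rewrite -(inj_eq val_inj) z_last /=; lia.
case: ifP => [xz|_]; last by rewrite big_pred0 // => y; rewrite andbF.
by rewrite (big_pred1 z) // => y; rewrite andbT -z_last (inj_eq val_inj).
Qed.

End TableauAction.

Lemma sorted_geq_nth (la : seq nat) : sorted geq la ->
  forall i j, (i <= j)%N -> (nth 0%N la j <= nth 0%N la i)%N.
Proof.
move=> la_sorted i j ij; have [j_lt | j_ge] := ltnP j (size la); last by rewrite nth_default.
have geq_trans : transitive geq by move=> a b c ba cb; apply: leq_trans cb ba.
by apply: (sorted_leq_nth geq_trans leqnn 0%N la_sorted); rewrite // inE; lia.
Qed.

Section FirstRow.
Variables (n : nat) (la : seq nat) (t : tab n).
Hypotheses (t_inj : inj_tab t) (t_surj : surj_tab t).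
Hypothesis t_diag : forall c, (t c != None) = in_diagram la c.
Hypothesis la_nonincr : forall i j, (i <= j)%N -> (nth 0%N la j <= nth 0%N la i)%N.
Hypothesis la1_lt_la0 : (nth 0%N la 1 < nth 0%N la 0)%N.
Variables (i0 jN N : 'I_n).
Hypothesis t_corner : t (i0, jN) = Some N.
Hypotheses (i0_first : val i0 = 0%N) (jN_last : val jN = (nth 0%N la 0).-1).
Implicit Types (x : 'I_n) (c : 'I_n * 'I_n).

Definition in_first_row x := [exists j, t (i0, j) == Some x].

Lemma lower_cell_col_lt c : t c != None -> c.1 != i0 -> (c.2 < nth 0%N la 1)%N.
Proof.
rewrite t_diag /in_diagram => c_diag c_low.
have c1_pos : (1 <= c.1)%N by rewrite lt0n -i0_first (inj_eq val_inj).
exact: leq_trans c_diag (la_nonincr c1_pos).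
Qed.

Lemma col_stab_fix_corner s : s \in col_stab t -> s N = N.
Proof.
rewrite inE => /forallP/(_ N)/existsP[j /existsP[i /existsP[i' /andP[/eqP tN /eqP tsN]]]].
case: (t_inj tN t_corner) => _ jjN; rewrite jjN in tsN.
have [i'_first|i'_low] := eqVneq i' i0; first by move: tsN; rewrite i'_first t_corner => -[].
have := lower_cell_col_lt (c := (i', jN)); rewrite tsN /= jN_last => /(_ isT i'_low); lia.
Qed.

Lemma alt_tabloid_sum_first_row x : in_first_row x ->
  alt_tabloid_sum (col_stab t) (perm_tab (tperm x N) t) = polytabloid t.
Proof.
case/existsP=> j /eqP tx; apply: alt_tabloid_sum_row_stab => //.
exact: tperm_row_stab t_surj tx t_corner erefl.
Qed.

Lemma alt_tabloid_sum_lower_row x : ~~ in_first_row x ->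
  alt_tabloid_sum (col_stab t) (perm_tab (tperm x N) t) = 0.
Proof.
move=> x_low; have [c tx] := t_surj x.
have c_low : c.1 != i0.
  by apply: contra x_low => /eqP c1; apply/existsP; exists c.2; rewrite -c1 -surjective_pairing tx.
have c2_lt : (c.2 < nth 0%N la 1)%N by apply: lower_cell_col_lt; rewrite ?tx.
have [a ta] : exists a, t (i0, c.2) = Some a.
  case E: (t (i0, c.2)) => [a|]; first by exists a.
  by move: (t_diag (i0, c.2)); rewrite E /in_diagram /= i0_first (ltn_trans c2_lt la1_lt_la0).
have ax : a != x.
  by apply: contra x_low => /eqP ax; apply/existsP; exists c.2; rewrite ta ax.
have Na : N != a.
  apply/eqP=> Na; rewrite -Na in ta.
  case: (t_inj ta t_corner) => /(congr1 val) /= c2_eq.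
  by move: c2_lt; rewrite c2_eq jN_last; lia.
apply: (alt_tabloid_sum_eq0 t_inj (inj_perm_tab (pi := tperm x N) t_inj) ax).
  exact: tperm_col_stab t_surj ta tx erefl.
apply: (tperm_row_stab (c := (i0, c.2)) (c' := (i0, jN)) (surj_perm_tab (tperm x N) t_surj)) => //.
  by rewrite ffunE ta /= tpermD // eq_sym.
by rewrite ffunE t_corner /= tpermR.
Qed.

Lemma card_first_row : #|[set x | in_first_row x]| = nth 0%N la 0.
Proof.
have la0_le_n : (nth 0%N la 0 <= n)%N by have := ltn_ord jN; rewrite jN_last; lia.
pose entry (j : 'I_(nth 0%N la 0)) := odflt N (t (i0, widen_ord la0_le_n j)).
have t_entry j : t (i0, widen_ord la0_le_n j) = Some (entry j).
  have := t_diag (i0, widen_ord la0_le_n j).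
  by rewrite /in_diagram /= i0_first ltn_ord /entry; case: (t _).
have -> : [set x | in_first_row x] = [set entry j | j : 'I_(nth 0%N la 0)].
  apply/setP => x; rewrite inE; apply/existsP/imsetP => [[j /eqP tx] | [j _ ->]].
    have j_lt : (j < nth 0%N la 0)%N by have := t_diag (i0, j); rewrite tx /in_diagram /= i0_first.
    exists (Ordinal j_lt) => //; apply: Some_inj; rewrite -t_entry -tx.
    by congr (t (i0, _)); apply: val_inj.
  by exists (widen_ord la0_le_n j); rewrite t_entry.
rewrite card_imset ?card_ord // => j j' jj'.
have t_entry' : t (i0, widen_ord la0_le_n j') = Some (entry j) by rewrite jj' t_entry.
by case: (t_inj (t_entry j) t_entry') => /val_inj.
Qed.

Lemma sum_tperm_polytabloid :
  \sum_(x | x != N) Defs.act (tperm x N) (polytabloid t) = (nth 0%N la 0).-1%:R *: polytabloid t.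
Proof.
rewrite (sum_act_tperm_alt _ col_stab_fix_corner).
rewrite (eq_bigr (fun x => if in_first_row x then polytabloid t else 0)) => [|x _]; last first.
  by case: ifP => [/alt_tabloid_sum_first_row | /negbT /alt_tabloid_sum_lower_row].
rewrite -big_mkcondr /= sumr_const scaler_nat; congr (_ *+ _).
have N_first : in_first_row N by apply/existsP; exists jN; rewrite t_corner.
rewrite -card_first_row (cardsD1 N) inE N_first add1n /=.
by apply: eq_card => x; rewrite !inE.
Qed.

End FirstRow.

Theorem proposition3 (n : nat) (la : seq nat) (t : tab n) :
  (3 <= n)%N ->
  is_partition n la ->
  (2 <= size la)%N ->
  (nth 0%N la 1 < nth 0%N la 0)%N ->
  is_standard la t ->
  (forall c : 'I_n * 'I_n, val c.1 = 0%N -> val c.2 = (nth 0%N la 0).-1 ->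
     omap val (t c) = Some n.-1) ->
  JM (polytabloid t) =
    ((n%:Z - (sumn (behead la))%:Z - 1)%:~R : algC) *: polytabloid t.
Proof.
move=> n_ge3 /and3P[la_sorted _ /eqP la_sum] _ la1_lt_la0 /andP[t_tab _] t_corner.
have n_split : n = (nth 0%N la 0 + sumn (behead la))%N by rewrite -la_sum; case: (la).
have n_pos : (0 < n)%N by lia.
have jN_lt : ((nth 0%N la 0).-1 < n)%N by lia.
have := t_corner (Ordinal n_pos, Ordinal jN_lt) erefl erefl.
case tN: (t _) => [N|] //= [] N_last.
(* Rather than counting cells to see that t is onto, note that otherwise C_t
   is empty and both sides vanish. *)
have [C0 | [s /col_stab_surj t_surj]] := set_0Vmem (col_stab t).
  rewrite /polytabloid C0 !big_set0 scaler0 /JM big1 // => x _; rewrite big1 // => y _.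
  by rewrite /Defs.act big1 // => S _; rewrite ffunE scale0r.
rewrite (JM_tperm_sum _ N_last) (sum_tperm_polytabloid (is_tableau_inj t_tab) t_surj
  (is_tableau_diag t_tab) (sorted_geq_nth la_sorted) la1_lt_la0 tN) //.
by congr (_ *: _); rewrite (_ : _ - _ - _ = ((nth 0%N la 0).-1)%:Z)%R //; lia.
Qed.
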